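(* Consider a solution $(\Sigma_+(\tau),\mathcal{R}_1(\tau),\mathcal{R}_2(\tau),M(\tau),\psi(\tau),v(\tau))$, defined for all $\tau\ge\tau_0$, of the system \begin{align*} \Sigma_+' &= -(1-\Sigma_+^2)\Sigma_+ - \mathcal{R}_1 + (1+\Sigma_+)\mathcal{R}_2\cos 2\psi - \frac{4\Omega v^2}{3+v^2},\\ \mathcal{R}_1' &= 2\big[(1+\Sigma_+)\Sigma_+ + \mathcal{R}_2\cos 2\psi\big]\mathcal{R}_1 - 2(1+\Sigma_+)(\cos 2\psi)\mathcal{R}_2,\\ \mathcal{R}_2' &= 2\big[(1+\Sigma_+)\Sigma_+ + \mathcal{R}_2\cos 2\psi\big]\mathcal{R}_2 - 2(1+\Sigma_+)(\cos 2\psi)\mathcal{R}_1,\\ M' &= -\big[(1+\Sigma_+)^2 + \mathcal{R}_2\cos 2\psi + 3\mathcal{R}_2 M\sin 2\psi\big]M,\\ \psi' &= \frac{2}{M} + (1+\Sigma_+)\frac{\mathcal{R}_1}{\mathcal{R}_2}\sin 2\psi,\\ v' &= \frac{6}{3-v^2}\Sigma_+(1-v^2)v, \end{align*} subject to the constraint \[ \mathcal{R}_1^2-\mathcal{R}_2^2-\left(\frac{4\Omega v}{3+v^2}\right)^2=0, \] where $\Omega := 1-\Sigma_+^2-\mathcal{R}_1$ and $'$ denotes $d/d\tau$. Suppose the solution satisfies $\Omega>0$, $\mathcal{R}_1>0$ and $\mathcal{R}_2>0$ for all $\tau\ge\tau_0$. Then \[ \lim_{\tau\to+\infty}(\Sigma_+,\mathcal{R}_1,\mathcal{R}_2,v,M)=(0,0,0,0,0),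 \] and moreover \[ \lim_{\tau\to+\infty}\frac{\mathcal{R}_1}{M^2}=+\infty,\qquad \lim_{\tau\to+\infty}\frac{\mathcal{R}_2}{M^2}=+\infty. \]
   Context: This system describes spatially homogeneous Bianchi type VII$_0$ cosmologies with a tilted irrotational radiation perfect fluid (equation of state $\tilde p=\tfrac13\tilde\rho$), zero cosmological constant, in Hubble-normalized variables with dimensionless time $\tau$ ($dt/d\tau=1/H$, $H$ the Hubble scalar). Here $\Sigma_+$ is a Hubble-normalized shear component, $v\in(-1,1)$ is the tilt, $\Omega$ is the density parameter, and $\mathcal{R}_1,\mathcal{R}_2,\psi$ are defined from the Hubble-normalized shear components $\Sigma_-,\Sigma_\times$ and curvature components $N_-,N_\times$ by $\mathcal{R}_1=\Sigma_-^2+\Sigma_\times^2+N_-^2+N_\times^2$, $\mathcal{R}_2\cos2\psi=\Sigma_-^2+\Sigma_\times^2-N_-^2-N_\times^2$, $\mathcal{R}_2\sin2\psi=2(\Sigma_-N_-+\Sigma_\times N_\times)$. The variable $M=1/N_+$, where $N_+$ is the remaining Hubble-normalized spatial curvature variable; for these cosmologies (with $\Omega>0$) it is a known standing fact, used by the paper, that $N_+\to+\infty$, i.e. $M\to0^+$, as $\tau\to+\infty$. *)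

From Stdlib Require Import Reals.
From Coquelicot Require Import Coquelicot.
Open Scope R_scope.

Definition Omega (Sp R1 : R) : R := 1 - Sp ^ 2 - R1.

(* Since M -> 0, the angle psi turns fast (psi' ~ 2 / M) and the terms in
   cos 2psi and sin 2psi average out: each quantity below is a natural one plus
   a correction of order M whose derivative cancels the oscillating part of its
   rate.
   - U ~ ln Omega + ln (1 - v^2) / 3 - ln (3 + v^2) is bounded above and
     eventually U' >= Sp^2, so Sp -> 0 by Barbalat's lemma.
   - The corrected shear tends to 0 and its rate is at most |Sp| + 14 M - R1, so
     R1 -> 0, again by Barbalat's lemma; the constraint gives R2 <= R1 and
     |v| <= 2 R1.
   - ln (R1 / M) plus a correction grows at rate >= 1/2, so R1 / M -> +oo.
   - For rho := 2 R2 / ((1 + Sp) M R1), N := |rho e^(2 i psi) - M / 4 + i|^2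
     increases at rate >= 1/8 while it lies in [1/8, 4], so eventually N < 1/4
     or N >= 3. Both force rho >= 1/4, i.e. R2 >= M R1 / 16, whence
     R2 / M^2 >= R1 / (16 M) -> +oo. *)

From Stdlib Require Import Reals Lra Psatz Classical.
From Coquelicot Require Import Coquelicot.
Open Scope R_scope.

Lemma increment_ge_of_derive_ge (f df : R -> R) (a b c : R) : a <= b ->
  (forall x, a <= x <= b -> is_derive f x (df x)) ->
  (forall x, a <= x <= b -> c <= df x) -> c * (b - a) <= f b - f a.
Proof.
  intros hab hd hc.
  destruct (MVT_gen f a b df) as [x [hx ->]];
    rewrite Rmin_left, Rmax_right in * by lra.
  - intros x hx; apply hd; lra.
  - intros x hx; apply continuity_pt_filterlim, (ex_derive_continuous f x).
    exists (df x); apply hd; lra.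
  - apply Rmult_le_compat_r; [lra | apply hc; lra].
Qed.

Lemma increment_le_of_derive_le (f df : R -> R) (a b c : R) : a <= b ->
  (forall x, a <= x <= b -> is_derive f x (df x)) ->
  (forall x, a <= x <= b -> df x <= c) -> f b - f a <= c * (b - a).
Proof.
  intros hab hd hc.
  enough (- c * (b - a) <= - f b - - f a) by lra.
  apply (increment_ge_of_derive_ge (fun x => - f x) (fun x => - df x)); auto.
  - intros x hx; apply (is_derive_opp f), hd; lra.
  - intros x hx; specialize (hc x hx); lra.
Qed.

Lemma eventually_gt (T : R) : Rbar_locally p_infty (fun t => T < t).
Proof. exists T; auto. Qed.

Lemma is_lim_0_eventually (f : R -> R) :
  is_lim f p_infty 0 <->
  forall eps, 0 < eps -> Rbar_locally p_infty (fun t => Rabs (f t) <= eps).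
Proof.
  rewrite <- is_lim_spec; split.
  - intros h eps heps; generalize (h (mkposreal eps heps)); apply filter_imp.
    intros t; rewrite Rminus_0_r; simpl; lra.
  - intros h eps; generalize (h (eps / 2) ltac:(destruct eps; simpl; lra)).
    apply filter_imp; intros t; rewrite Rminus_0_r; destruct eps; simpl; lra.
Qed.

Lemma is_lim_p_infty_eventually (f : R -> R) :
  (forall K, Rbar_locally p_infty (fun t => K <= f t)) -> is_lim f p_infty p_infty.
Proof.
  intros h; apply is_lim_spec; intros K.
  generalize (h (K + 1)); apply filter_imp; intros t; lra.
Qed.

Lemma is_lim_incr_bounded (f : R -> R) (T B : R) :
  (forall s t, T < s <= t -> f s <= f t) -> (forall t, T < t -> f t <= B) ->
  exists l : R, is_lim f p_infty l.
Proof.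
  intros hincr hB.
  set (E := fun y => exists t, T < t /\ y = f t).
  destruct (completeness E) as [l [hub hlub]].
  - exists B; intros y [t [ht ->]]; auto.
  - exists (f (T + 1)), (T + 1); split; [lra | auto].
  exists l; apply is_lim_spec; intros eps.
  assert (hclose : exists t0, T < t0 /\ l - eps < f t0).
  { apply NNPP; intros hn.
    enough (l <= l - eps) by (destruct eps; simpl in *; lra).
    apply hlub; intros y [t [ht ->]].
    apply Rnot_lt_le; intros hlt; apply hn; eauto. }
  destruct hclose as [t0 [ht0 hlt]].
  exists t0; intros t ht.
  assert (f t <= l) by (apply hub; exists t; split; [lra | auto]).
  assert (f t0 <= f t) by (apply hincr; lra).
  apply Rabs_lt_between'; lra.
Qed.

(* A large value of [g] persists for a fixed time, since [g] cannot decrease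
   fast, and meanwhile [F] would drop by a definite amount, contradicting its
   convergence. *)
Lemma barbalat (F dF g dg e : R -> R) (T C l : R) : 0 < C ->
  (forall t, T < t -> is_derive F t (dF t)) ->
  (forall t, T < t -> is_derive g t (dg t)) ->
  (forall t, T < t -> dF t <= e t - g t) ->
  (forall t, T < t -> - C <= dg t) ->
  is_lim F p_infty l ->
  (forall eps, 0 < eps -> Rbar_locally p_infty (fun t => e t <= eps)) ->
  forall eps, 0 < eps -> Rbar_locally p_infty (fun t => g t <= eps).
Proof.
  intros hC hF hg hdF hdg hl he eps heps.
  set (h := eps / (2 * C)).
  assert (hh : 0 < h) by (apply Rdiv_lt_0_compat; lra).
  assert (hCh : C * h = eps / 2) by (unfold h; field; lra).
  apply is_lim_spec in hl.
  destruct (hl (mkposreal (eps * h / 16) ltac:(nra))) as [T1 hT1]; simpl in hT1.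
  destruct (he (eps / 4) ltac:(lra)) as [T2 hT2].
  exists (Rmax T (Rmax T1 T2)); intros t ht.
  apply Rmax_Rlt in ht as [htT ht]; apply Rmax_Rlt in ht as [ht1 ht2].
  apply Rnot_lt_le; intros hgt.
  assert (hdrop : F (t + h) - F t <= - (eps / 4) * (t + h - t)).
  { apply (increment_le_of_derive_le F dF); [lra | intros x hx; apply hF; lra |].
    intros x hx.
    assert (- C * (x - t) <= g x - g t).
    { apply (increment_ge_of_derive_ge g dg); [lra | |];
        intros y hy; [apply hg | apply hdg]; lra. }
    assert (C * (x - t) <= C * h) by (apply Rmult_le_compat_l; lra).
    specialize (hdF x ltac:(lra)); specialize (hT2 x ltac:(lra)); lra. }
  specialize (hT1 t ht1) as hFt; specialize (hT1 (t + h) ltac:(lra)) as hFth.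
  apply Rabs_lt_between' in hFt, hFth; nra.
Qed.

Lemma last_point_above (f : R -> R) (a b L : R) : a <= b ->
  (forall x, a <= x <= b -> continuity_pt f x) -> L <= f a ->
  exists m, a <= m <= b /\ L <= f m /\ forall x, m < x <= b -> f x < L.
Proof.
  intros hab hc hfa.
  set (E := fun x => a <= x <= b /\ L <= f x).
  destruct (completeness E) as [m [hub hlub]].
  - exists b; intros x [hx _]; lra.
  - exists a; split; [lra | auto].
  assert (ham : a <= m) by (apply hub; split; [lra | auto]).
  assert (hmb : m <= b) by (apply hlub; intros x [hx _]; lra).
  exists m; split; [lra | split].
  - apply Rnot_lt_le; intros hlt.
    destruct (Heine_cor2 hc (mkposreal (L - f m) ltac:(lra))) as [d hd]; simpl in hd.
    assert (hnear : exists x, E x /\ m - d < x).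
    { apply NNPP; intros hn.
      enough (m <= m - d) by (destruct d; simpl in *; lra).
      apply hlub; intros x hx; apply Rnot_lt_le; intros hlt'; apply hn; eauto. }
    destruct hnear as [x [[hx hLx] hdx]].
    assert (x <= m) by (apply hub; split; auto).
    specialize (hd x m hx ltac:(lra) ltac:(apply Rabs_lt_between'; lra)).
    apply Rabs_lt_between' in hd; lra.
  - intros x hx; apply Rnot_le_lt; intros hLx.
    assert (x <= m) by (apply hub; split; [lra | auto]); lra.
Qed.

Lemma ge_forward_invariant (f df : R -> R) (T L eta : R) : 0 < eta ->
  (forall t, T < t -> is_derive f t (df t)) ->
  (forall t, T < t -> L - eta <= f t <= L + eta -> 0 <= df t) ->
  forall a b, T < a <= b -> L <= f a -> L <= f b.
Proof.
  intros heta hd hpos a b [hTa hab] hfa.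
  assert (hc : forall x, a <= x <= b -> continuity_pt f x).
  { intros x hx; apply continuity_pt_filterlim, (ex_derive_continuous f x).
    exists (df x); apply hd; lra. }
  apply Rnot_lt_le; intros hfb.
  destruct (last_point_above f a b L hab hc hfa) as [m [hm [hfm hbelow]]].
  assert (hmb : m < b) by (destruct (Req_dec m b); subst; lra).
  destruct (Heine_cor2 hc (mkposreal eta heta)) as [d hunif]; simpl in hunif.
  set (x := Rmin (m + d / 2) b).
  assert (hx : m < x <= b) by (unfold x; split; [apply Rmin_glb_lt | apply Rmin_r];
    destruct d; simpl in *; lra).
  assert (hxd : x <= m + d / 2) by apply Rmin_l.
  assert (hnear : forall y, m <= y <= x -> Rabs (f y - f m) < eta).
  { intros y hy; apply hunif; try lra; apply Rabs_lt_between'; destruct d; simpl in *; lra. }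
  assert (hfx : f x < L) by (apply hbelow; lra).
  enough (0 * (x - m) <= f x - f m) by lra.
  apply (increment_ge_of_derive_ge f df); [lra | intros y hy; apply hd; lra |].
  intros y hy; apply hpos; [lra |].
  specialize (hnear y hy) as hy'; specialize (hnear x ltac:(lra)) as hx'.
  apply Rabs_lt_between' in hy', hx'.
  destruct (Req_dec y m) as [-> | hym]; [lra |].
  specialize (hbelow y ltac:(lra)); lra.
Qed.

Lemma eventually_outside_band (f df : R -> R) (T a b a' b' delta : R) :
  0 < delta -> a < a' -> a' <= b' -> b' < b ->
  (forall t, T < t -> is_derive f t (df t)) ->
  (forall t, T < t -> a <= f t <= b -> delta <= df t) ->
  Rbar_locally p_infty (fun t => f t < a' \/ b' <= f t).
Proof.
  intros hdelta haa' ha'b' hbb' hd hrate.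
  assert (hinv : forall L, a < L < b -> forall s t, T < s <= t -> L <= f s -> L <= f t).
  { intros L hL; apply (ge_forward_invariant f df T L (Rmin (L - a) (b - L))).
    - apply Rmin_glb_lt; lra.
    - exact hd.
    - intros t ht hft; pose proof (Rmin_l (L - a) (b - L));
        pose proof (Rmin_r (L - a) (b - L)).
      specialize (hrate t ht ltac:(lra)); lra. }
  destruct (classic (exists t1, T < t1 /\ a' <= f t1)) as [[t1 [ht1 hf1]] | hnever].
  - exists (t1 + (b' - a') / delta); intros t ht; right.
    assert (hlen : 0 <= (b' - a') / delta) by (apply Rdiv_le_0_compat; lra).
    apply Rnot_lt_le; intros hft.
    assert (hstay : forall s, t1 <= s <= t -> a' <= f s <= b').
    { intros s hs; split; [apply (hinv a' ltac:(lra) t1 s); auto; lra |].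
      apply Rnot_lt_le; intros hs'.
      enough (b' <= f t) by lra.
      apply (hinv b' ltac:(lra) s t); lra. }
    assert (delta * (t - t1) <= f t - f t1).
    { apply (increment_ge_of_derive_ge f df); [lra | intros s hs; apply hd; lra |].
      intros s hs; apply hrate; [lra |]; specialize (hstay s hs); lra. }
    assert (b' - a' < delta * (t - t1)).
    { replace (b' - a') with (delta * ((b' - a') / delta)) by (field; lra).
      apply Rmult_lt_compat_l; lra. }
    lra.
  - exists T; intros t ht; left; apply Rnot_le_lt; intros hft; eauto.
Qed.

Lemma Rabs_mult_le (a b A B : R) : Rabs a <= A -> Rabs b <= B -> Rabs (a * b) <= A * B.
Proof. intros; rewrite Rabs_mult; apply Rmult_le_compat; auto using Rabs_pos. Qed.

Lemma Rabs_plus_le (a b A B : R) : Rabs a <= A -> Rabs b <= B -> Rabs (a + b) <= A + B.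
Proof. intros; pose proof (Rabs_triang a b); lra. Qed.

Lemma Rabs_minus_le (a b A B : R) : Rabs a <= A -> Rabs b <= B -> Rabs (a - b) <= A + B.
Proof.
  intros; pose proof (Rabs_triang a (- b)); rewrite Rabs_Ropp in *; unfold Rminus; lra.
Qed.

Lemma Rabs_opp_le (a A : R) : Rabs a <= A -> Rabs (- a) <= A.
Proof. rewrite Rabs_Ropp; auto. Qed.

Lemma Rabs_pow_le (a A : R) (n : nat) : Rabs a <= A -> Rabs (a ^ n) <= A ^ n.
Proof. intros; rewrite <- RPow_abs; apply pow_incr; split; auto using Rabs_pos. Qed.

Lemma Rabs_div_le (a b A : R) : Rabs a <= A -> 0 < b -> Rabs (a / b) <= A / b.
Proof.
  intros ha hb; unfold Rdiv; rewrite Rabs_mult, (Rabs_pos_eq (/ b));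
    [apply Rmult_le_compat_r |]; auto; apply Rlt_le, Rinv_0_lt_compat; auto.
Qed.

Ltac bound_Rabs :=
  match goal with
  | |- Rabs (_ * _) <= _ => eapply Rabs_mult_le; bound_Rabs
  | |- Rabs (_ + _) <= _ => eapply Rabs_plus_le; bound_Rabs
  | |- Rabs (_ - _) <= _ => eapply Rabs_minus_le; bound_Rabs
  | |- Rabs (- _) <= _ => eapply Rabs_opp_le; bound_Rabs
  | |- Rabs (_ ^ _) <= _ => eapply Rabs_pow_le; bound_Rabs
  | |- Rabs (_ / IZR _) <= _ => eapply Rabs_div_le; [bound_Rabs | lra]
  | |- Rabs (IZR _) <= _ => rewrite Rabs_pos_eq by lra; apply Rle_refl
  | |- Rabs _ <= _ => eassumption
  end.

Lemma cos_sin_bounds (x : R) : Rabs (cos x) <= 1 /\ Rabs (sin x) <= 1.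
Proof. split; apply Rabs_le; [apply COS_bound | apply SIN_bound]. Qed.

Definition admissible (S r1 r2 : R) : Prop := 0 < r2 <= r1 /\ 0 < Omega S r1.

Lemma admissible_bounds (S r1 r2 : R) : admissible S r1 r2 ->
  -1 < S < 1 /\ 0 < r2 <= r1 /\ r1 < 1 /\ 0 < 1 - S ^ 2 - r1.
Proof. unfold admissible, Omega; intros [hr hO]; repeat split; nra. Qed.

Definition M_decay (S r2 m c s : R) : R := (1 + S) ^ 2 + r2 * c + 3 * r2 * m * s.

Definition Sp_rate (S r1 r2 c w : R) : R :=
  - (1 - S ^ 2) * S - r1 + (1 + S) * r2 * c - 4 * Omega S r1 * w ^ 2 / (3 + w ^ 2).

Definition R1_rate (S r1 r2 c : R) : R :=
  2 * ((1 + S) * S + r2 * c) * r1 - 2 * (1 + S) * c * r2.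

Definition R2_rate (S r1 r2 c : R) : R :=
  2 * ((1 + S) * S + r2 * c) * r2 - 2 * (1 + S) * c * r1.

(* [(R2 M sin 2psi)' = 4 R2 cos 2psi + M * osc_remainder]: the leading term comes
   from the fast rotation [psi' ~ 2 / M]. *)
Definition osc_remainder (S r1 r2 m c s : R) : R :=
  R2_rate S r1 r2 c * s - r2 * s * M_decay S r2 m c s + 2 * (1 + S) * r1 * c * s.

Lemma tilt_term_bounds (S r1 w : R) : 0 <= r1 -> 0 < 1 - S ^ 2 - r1 -> -1 < w < 1 ->
  0 <= 4 * Omega S r1 * w ^ 2 / (3 + w ^ 2) <= 4 * Rabs w.
Proof.
  intros hr1 hO hw; unfold Omega.
  assert (hav : Rabs w * Rabs w = w ^ 2) by (rewrite <- Rabs_mult, Rabs_pos_eq; nra).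
  assert (Rabs w < 1) by (apply Rabs_def1; lra).
  pose proof (Rabs_pos w).
  set (y := / (3 + w ^ 2)).
  assert (hy : y * (3 + w ^ 2) = 1) by (unfold y; field; nra).
  assert (0 < y) by (unfold y; apply Rinv_0_lt_compat; nra).
  assert (0 <= w ^ 2 * y <= Rabs w) by (split; nra).
  unfold Rdiv; fold y; rewrite Rmult_assoc; split; nra.
Qed.

Lemma Sp_rate_bound (S r1 r2 c w : R) : admissible S r1 r2 -> -1 < w < 1 -> Rabs c <= 1 ->
  Rabs (Sp_rate S r1 r2 c w) <= Rabs S + r1 + 2 * r2 + 4 * Rabs w.
Proof.
  intros hadm hw hc; destruct (admissible_bounds S r1 r2 hadm) as (hS & hr & hr1 & hO).
  pose proof (tilt_term_bounds S r1 w ltac:(lra) hO hw) as htilt.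
  assert (hcubic : Rabs (- (1 - S ^ 2) * S) <= Rabs S).
  { rewrite Rabs_mult, Rabs_Ropp, Rabs_pos_eq by nra; pose proof (Rabs_pos S); nra. }
  assert (hrot : Rabs ((1 + S) * r2 * c) <= 2 * r2).
  { rewrite !Rabs_mult, (Rabs_pos_eq (1 + S)), (Rabs_pos_eq r2) by lra.
    assert (0 <= (1 + S) * r2 <= 2 * r2) by (split; nra).
    pose proof (Rabs_pos c); nra. }
  unfold Sp_rate; eapply Rle_trans.
  - apply Rabs_minus_le; [apply Rabs_plus_le; [apply Rabs_minus_le |] |].
    + exact hcubic.
    + apply Rle_refl.
    + exact hrot.
    + rewrite Rabs_pos_eq; [apply Rle_refl | lra].
  - rewrite (Rabs_pos_eq r1) by lra; lra.
Qed.

Section Asymptotics.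

Context {tau0 : R} {Sp R1 R2 M psi v : R -> R}.

Hypothesis dSp : forall t, tau0 < t -> is_derive Sp t
  (- (1 - Sp t ^ 2) * Sp t - R1 t + (1 + Sp t) * R2 t * cos (2 * psi t)
   - 4 * Omega (Sp t) (R1 t) * v t ^ 2 / (3 + v t ^ 2)).
Hypothesis dR1 : forall t, tau0 < t -> is_derive R1 t
  (2 * ((1 + Sp t) * Sp t + R2 t * cos (2 * psi t)) * R1 t
   - 2 * (1 + Sp t) * cos (2 * psi t) * R2 t).
Hypothesis dR2 : forall t, tau0 < t -> is_derive R2 t
  (2 * ((1 + Sp t) * Sp t + R2 t * cos (2 * psi t)) * R2 t
   - 2 * (1 + Sp t) * cos (2 * psi t) * R1 t).
Hypothesis dM : forall t, tau0 < t -> is_derive M t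
  (- ((1 + Sp t) ^ 2 + R2 t * cos (2 * psi t)
      + 3 * R2 t * M t * sin (2 * psi t)) * M t).
Hypothesis dpsi : forall t, tau0 < t -> is_derive psi t
  (2 / M t + (1 + Sp t) * (R1 t / R2 t) * sin (2 * psi t)).
Hypothesis dv : forall t, tau0 < t -> is_derive v t
  (6 / (3 - v t ^ 2) * Sp t * (1 - v t ^ 2) * v t).
Hypothesis hv : forall t, tau0 <= t -> -1 < v t < 1.
Hypothesis hcons : forall t, tau0 <= t ->
  R1 t ^ 2 - R2 t ^ 2 - (4 * Omega (Sp t) (R1 t) * v t / (3 + v t ^ 2)) ^ 2 = 0.
Hypothesis hOmega : forall t, tau0 <= t -> 0 < Omega (Sp t) (R1 t).
Hypothesis hR1 : forall t, tau0 <= t -> 0 < R1 t.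
Hypothesis hR2 : forall t, tau0 <= t -> 0 < R2 t.
Hypothesis hMpos : forall t, tau0 <= t -> 0 < M t.
Hypothesis hMlim : is_lim M p_infty 0.

Lemma state_admissible (t : R) : tau0 <= t -> admissible (Sp t) (R1 t) (R2 t).
Proof.
  intros ht; split; [split |]; auto.
  pose proof (hR1 t ht); pose proof (hR2 t ht); pose proof (hcons t ht).
  set (w := 4 * Omega (Sp t) (R1 t) * v t / (3 + v t ^ 2)) in *.
  pose proof (pow2_ge_0 w); clearbody w; nra.
Qed.

Ltac derive_solution :=
  lazymatch goal with
  | |- is_derive (fun x => Sp x) _ _ => apply dSp
  | |- is_derive (fun x => R1 x) _ _ => apply dR1
  | |- is_derive (fun x => R2 x) _ _ => apply dR2
  | |- is_derive (fun x => M x) _ _ => apply dM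
  | |- is_derive (fun x => psi x) _ _ => apply dpsi
  | |- is_derive (fun x => v x) _ _ => apply dv
  end; lra.

Ltac auto_derive_solution :=
  auto_derive;
  [ repeat split; try (eexists; derive_solution)
  | repeat match goal with |- context [Derive ?f ?t] =>
      erewrite (is_derive_unique f t) by derive_solution end ].

Lemma eventually_state :
  Rbar_locally p_infty (fun t => tau0 < t /\ admissible (Sp t) (R1 t) (R2 t) /\
    -1 < v t < 1 /\ 0 < M t /\ Rabs (cos (2 * psi t)) <= 1 /\ Rabs (sin (2 * psi t)) <= 1).
Proof.
  exists tau0; intros t ht.
  pose proof (state_admissible t ltac:(lra)); pose proof (hv t ltac:(lra)).
  pose proof (hMpos t ltac:(lra)); pose proof (cos_sin_bounds (2 * psi t)).
  tauto.
Qed.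

(* The terms in [R2 M sin 2psi] cancel the oscillating terms in [cos 2psi] of
   the derivative of the main part. *)
Let U (t : R) : R :=
  ln (Omega (Sp t) (R1 t)) + ln (1 - v t ^ 2) / 3 - ln (3 + v t ^ 2)
  - R2 t * M t * sin (2 * psi t) / 2
  - 48 * (M t + R2 t * M t ^ 2 * sin (2 * psi t) / 4).

Definition U_rate (S r1 r2 m c s : R) : R :=
  2 * S ^ 2 - m * osc_remainder S r1 r2 m c s / 2 + 48 * m * (1 + S) ^ 2
  - 48 * m ^ 2 * (- 3 * r2 * s + osc_remainder S r1 r2 m c s / 4
                  - r2 * s * M_decay S r2 m c s / 4).

Lemma is_derive_U (t : R) : tau0 < t ->
  is_derive U t (U_rate (Sp t) (R1 t) (R2 t) (M t) (cos (2 * psi t)) (sin (2 * psi t))).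
Proof.
  intros ht; pose proof (state_admissible t ltac:(lra)) as hadm.
  destruct (admissible_bounds _ _ _ hadm) as (hS & hR & hR1' & hO).
  pose proof (hv t ltac:(lra)); pose proof (hMpos t ltac:(lra)).
  unfold U, Omega; auto_derive_solution; try nra.
  unfold U_rate, osc_remainder, R2_rate, M_decay, Omega.
  field; repeat split; nra.
Qed.

Lemma osc_remainder_bound (S r1 r2 m c s : R) : admissible S r1 r2 -> 0 < m <= 1 ->
  Rabs c <= 1 -> Rabs s <= 1 -> Rabs (osc_remainder S r1 r2 m c s) <= 22.
Proof.
  intros hadm hM hc hs; destruct (admissible_bounds _ _ _ hadm) as (hS & hr & hr1 & _).
  assert (Rabs S <= 1) by (apply Rabs_le; lra).
  assert (Rabs r1 <= 1) by (apply Rabs_le; lra).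
  assert (Rabs r2 <= 1) by (apply Rabs_le; lra).
  assert (Rabs m <= 1) by (apply Rabs_le; lra).
  unfold osc_remainder, R2_rate, M_decay; eapply Rle_trans; [bound_Rabs | lra].
Qed.

Lemma U_rate_ge (S r1 r2 m c s : R) : admissible S r1 r2 -> 0 < m <= / 1000 ->
  Rabs c <= 1 -> Rabs s <= 1 -> S ^ 2 <= U_rate S r1 r2 m c s.
Proof.
  intros hadm hM hc hs; destruct (admissible_bounds _ _ _ hadm) as (hS & hr & hr1 & _).
  pose proof (osc_remainder_bound S r1 r2 m c s hadm ltac:(lra) hc hs) as hB.
  set (B := osc_remainder S r1 r2 m c s) in *.
  assert (Rabs S <= 1) by (apply Rabs_le; lra).
  assert (Rabs r2 <= 1) by (apply Rabs_le; lra).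
  assert (Rabs m <= 1) by (apply Rabs_le; lra).
  assert (hQ : Rabs (r2 * s * M_decay S r2 m c s / 4) <= 8 / 4).
  { apply Rabs_div_le; [| lra]; unfold M_decay.
    eapply Rle_trans; [bound_Rabs | lra]. }
  apply Rabs_le_between in hB, hQ; apply Rabs_le_between in hs.
  assert (m * B <= 22 * m) by nra.
  assert (hrest : m ^ 2 * (- 3 * r2 * s + B / 4 - r2 * s * M_decay S r2 m c s / 4)
                  <= 11 * m ^ 2).
  { assert (- 3 * r2 * s <= 3) by nra; nra. }
  unfold U_rate; fold B; clearbody B.
  assert (m ^ 2 <= m / 1000) by nra.
  destruct (Rle_lt_dec (- 1 / 2) S).
  - assert (1 / 4 <= (1 + S) ^ 2) by nra; nra.
  - assert (1 / 4 <= S ^ 2) by nra.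
    assert (0 <= m * (1 + S) ^ 2) by (apply Rmult_le_pos; [lra | apply pow2_ge_0]).
    nra.
Qed.

Lemma U_le (t : R) : tau0 <= t -> M t <= 1 -> U t <= 13.
Proof.
  intros ht hM1.
  destruct (admissible_bounds _ _ _ (state_admissible t ht)) as (hS & hR & hr1 & hO).
  pose proof (hv t ht); pose proof (hMpos t ht).
  destruct (cos_sin_bounds (2 * psi t)) as [_ hs]; apply Rabs_le_between in hs.
  assert (ln (Omega (Sp t) (R1 t)) <= 0) by (rewrite <- ln_1; apply ln_le; unfold Omega; nra).
  assert (ln (1 - v t ^ 2) <= 0) by (rewrite <- ln_1; apply ln_le; nra).
  assert (0 <= ln (3 + v t ^ 2)) by (rewrite <- ln_1; apply ln_le; nra).
  assert (0 <= R2 t * M t <= 1) by (split; nra).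
  assert (- 1 <= R2 t * M t * sin (2 * psi t) <= 1) by (split; nra).
  assert (- M t <= M t * (R2 t * M t * sin (2 * psi t))) by nra.
  unfold U; nra.
Qed.

Lemma is_derive_Sp_sq (t : R) : tau0 < t ->
  is_derive (fun x => Sp x ^ 2) t
    (2 * Sp t * Sp_rate (Sp t) (R1 t) (R2 t) (cos (2 * psi t)) (v t)).
Proof. intros ht; auto_derive_solution; unfold Sp_rate; ring. Qed.

Lemma Sp_rate_abs_le (S r1 r2 c w : R) : admissible S r1 r2 -> -1 < w < 1 ->
  Rabs c <= 1 -> Rabs (Sp_rate S r1 r2 c w) <= 8.
Proof.
  intros hadm hw hc; destruct (admissible_bounds _ _ _ hadm) as (hS & hr & hr1 & _).
  pose proof (Sp_rate_bound S r1 r2 c w hadm hw hc).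
  assert (Rabs S <= 1) by (apply Rabs_le; lra).
  assert (Rabs w <= 1) by (apply Rabs_le; lra).
  lra.
Qed.

Lemma Sp_lim : is_lim Sp p_infty 0.
Proof.
  pose proof (proj1 (is_lim_0_eventually M) hMlim (/ 1000) ltac:(lra)) as hMsmall.
  destruct (filter_and _ _ eventually_state hMsmall) as [T hT].
  assert (hstate : forall t, T < t -> tau0 < t /\ admissible (Sp t) (R1 t) (R2 t) /\
    -1 < v t < 1 /\ 0 < M t <= / 1000 /\ Rabs (cos (2 * psi t)) <= 1 /\
    Rabs (sin (2 * psi t)) <= 1).
  { intros t ht; destruct (hT t ht) as ((? & ? & ? & ? & ? & ?) & hM).
    apply Rabs_le_between in hM; assert (M t <= / 1000) by lra; tauto. }
  set (dU t := U_rate (Sp t) (R1 t) (R2 t) (M t) (cos (2 * psi t)) (sin (2 * psi t))).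
  assert (hdU : forall t, T < t -> is_derive U t (dU t)).
  { intros t ht; apply is_derive_U, hstate, ht. }
  assert (hdU_ge : forall t, T < t -> Sp t ^ 2 <= dU t).
  { intros t ht; destruct (hstate t ht) as (_ & ? & _ & ? & ? & ?); apply U_rate_ge; auto. }
  destruct (is_lim_incr_bounded U T 13) as [l hl].
  - intros s t hst; enough (0 * (t - s) <= U t - U s) by lra.
    apply (increment_ge_of_derive_ge U dU); [lra | intros x hx; apply hdU; lra |].
    intros x hx; specialize (hdU_ge x ltac:(lra)); pose proof (pow2_ge_0 (Sp x)); lra.
  - intros t ht; destruct (hstate t ht) as (? & _ & _ & ? & _); apply U_le; lra.
  assert (hsq : forall eps, 0 < eps -> Rbar_locally p_infty (fun t => Sp t ^ 2 <= eps)).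
  { apply (barbalat (fun t => - U t) (fun t => - dU t) (fun t => Sp t ^ 2)
      (fun t => 2 * Sp t * Sp_rate (Sp t) (R1 t) (R2 t) (cos (2 * psi t)) (v t))
      (fun _ => 0) T 16 (- l)); try lra.
    - intros t ht; apply (is_derive_opp U), hdU, ht.
    - intros t ht; apply is_derive_Sp_sq, hstate, ht.
    - intros t ht; specialize (hdU_ge t ht); lra.
    - intros t ht; destruct (hstate t ht) as (_ & hadm & hvt & _ & hc & _).
      pose proof (Sp_rate_abs_le _ _ _ _ _ hadm hvt hc) as hrate.
      destruct (admissible_bounds _ _ _ hadm) as (hS & _).
      apply Rabs_le_between in hrate; nra.
    - exact (is_lim_opp U p_infty l hl).
    - intros eps heps; exists T; intros; lra. }
  apply is_lim_0_eventually; intros eps heps.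
  generalize (hsq (eps ^ 2) ltac:(nra)); apply filter_imp; intros t ht.
  apply Rabs_le; split; nra.
Qed.

(* The correction cancels the oscillating term [(1 + Sp) R2 cos 2psi] of [Sp']. *)
Let Sp_avg (t : R) : R := Sp t - (1 + Sp t) * R2 t * M t * sin (2 * psi t) / 4.

Definition Sp_avg_rate (S r1 r2 m c s w : R) : R :=
  - (1 - S ^ 2) * S - r1 - 4 * Omega S r1 * w ^ 2 / (3 + w ^ 2)
  - m * (Sp_rate S r1 r2 c w * r2 * s + (1 + S) * osc_remainder S r1 r2 m c s) / 4.

Lemma is_derive_Sp_avg (t : R) : tau0 < t ->
  is_derive Sp_avg t
    (Sp_avg_rate (Sp t) (R1 t) (R2 t) (M t) (cos (2 * psi t)) (sin (2 * psi t)) (v t)).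
Proof.
  intros ht; pose proof (hMpos t ltac:(lra)); pose proof (hR2 t ltac:(lra)).
  unfold Sp_avg; auto_derive_solution.
  unfold Sp_avg_rate, Sp_rate, osc_remainder, R2_rate, M_decay, Omega.
  field; repeat split; nra.
Qed.

Lemma Sp_avg_rate_le (S r1 r2 m c s w : R) : admissible S r1 r2 -> -1 < w < 1 ->
  0 < m <= 1 -> Rabs c <= 1 -> Rabs s <= 1 ->
  Sp_avg_rate S r1 r2 m c s w <= Rabs S + 14 * m - r1.
Proof.
  intros hadm hw hm hc hs; destruct (admissible_bounds _ _ _ hadm) as (hS & hr & hr1 & hO).
  pose proof (tilt_term_bounds S r1 w ltac:(lra) hO hw) as [htilt _].
  assert (hcubic : - (1 - S ^ 2) * S <= Rabs S).
  { destruct (Rle_lt_dec 0 S); [rewrite Rabs_pos_eq | rewrite Rabs_left]; nra. }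
  assert (hrem : Rabs (Sp_rate S r1 r2 c w * r2 * s + (1 + S) * osc_remainder S r1 r2 m c s)
                 <= 8 * 1 * 1 + 2 * 22).
  { pose proof (Sp_rate_abs_le S r1 r2 c w hadm hw hc).
    pose proof (osc_remainder_bound S r1 r2 m c s hadm hm hc hs).
    assert (Rabs r2 <= 1) by (apply Rabs_le; lra).
    assert (Rabs (1 + S) <= 2) by (apply Rabs_le; lra).
    apply Rabs_plus_le; [apply Rabs_mult_le; [apply Rabs_mult_le |] |
      apply Rabs_mult_le]; assumption. }
  set (X := Sp_rate S r1 r2 c w * r2 * s + (1 + S) * osc_remainder S r1 r2 m c s) in *.
  apply Rabs_le_between in hrem.
  assert (- (m * X) <= 52 * m) by nra.
  unfold Sp_avg_rate; fold X; lra.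
Qed.

Lemma R1_rate_ge (S r1 r2 c : R) : admissible S r1 r2 -> Rabs c <= 1 ->
  - 10 <= R1_rate S r1 r2 c.
Proof.
  intros hadm hc; destruct (admissible_bounds _ _ _ hadm) as (hS & hr & hr1 & _).
  assert (Rabs S <= 1) by (apply Rabs_le; lra).
  assert (Rabs r1 <= 1) by (apply Rabs_le; lra).
  assert (Rabs r2 <= 1) by (apply Rabs_le; lra).
  enough (hb : Rabs (R1_rate S r1 r2 c) <= 10) by (apply Rabs_le_between in hb; lra).
  unfold R1_rate; eapply Rle_trans; [bound_Rabs | lra].
Qed.

Lemma Sp_avg_lim : is_lim Sp_avg p_infty 0.
Proof.
  apply is_lim_0_eventually; intros eps heps.
  pose proof (proj1 (is_lim_0_eventually Sp) Sp_lim (eps / 2) ltac:(lra)) as hS.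
  pose proof (proj1 (is_lim_0_eventually M) hMlim (eps / 2) ltac:(lra)) as hM.
  generalize (filter_and _ _ eventually_state (filter_and _ _ hS hM)); apply filter_imp.
  intros t ((_ & hadm & _ & _ & _ & hs) & hSt & hMt).
  destruct (admissible_bounds _ _ _ hadm) as (hS0 & hr & hr1 & _).
  assert (Rabs (1 + Sp t) <= 2) by (apply Rabs_le; lra).
  assert (Rabs (R2 t) <= 1) by (apply Rabs_le; lra).
  unfold Sp_avg; eapply Rle_trans.
  - apply Rabs_minus_le; [exact hSt | apply Rabs_div_le; [| lra]].
    apply Rabs_mult_le; [apply Rabs_mult_le; [apply Rabs_mult_le |] |]; eassumption.
  - lra.
Qed.

Lemma R1_lim : is_lim R1 p_infty 0.
Proof.
  pose proof (proj1 (is_lim_0_eventually M) hMlim 1 ltac:(lra)) as hMsmall.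
  destruct (filter_and _ _ eventually_state hMsmall) as [T hT].
  assert (hsmall : forall eps, 0 < eps -> Rbar_locally p_infty (fun t => R1 t <= eps)).
  { apply (barbalat Sp_avg
      (fun t => Sp_avg_rate (Sp t) (R1 t) (R2 t) (M t) (cos (2 * psi t)) (sin (2 * psi t))
                            (v t))
      R1 (fun t => R1_rate (Sp t) (R1 t) (R2 t) (cos (2 * psi t)))
      (fun t => Rabs (Sp t) + 14 * M t) T 10 0); try lra.
    - intros t ht; apply is_derive_Sp_avg; destruct (hT t ht) as [[] _]; auto.
    - intros t ht; apply dR1; destruct (hT t ht) as [[] _]; auto.
    - intros t ht; destruct (hT t ht) as ((_ & hadm & hvt & hMt & hc & hs) & hM).
      apply Rabs_le_between in hM; apply Sp_avg_rate_le; auto; lra.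
    - intros t ht; destruct (hT t ht) as ((_ & hadm & _ & _ & hc & _) & _).
      apply R1_rate_ge; auto.
    - exact Sp_avg_lim.
    - intros eps heps.
      pose proof (proj1 (is_lim_0_eventually Sp) Sp_lim (eps / 2) ltac:(lra)) as hS.
      pose proof (proj1 (is_lim_0_eventually M) hMlim (eps / 28) ltac:(lra)) as hM.
      generalize (filter_and _ _ hS hM); apply filter_imp; intros t [hSt hMt].
      apply Rabs_le_between in hMt; lra. }
  apply is_lim_0_eventually; intros eps heps.
  generalize (filter_and _ _ eventually_state (hsmall eps heps)); apply filter_imp.
  intros t ((_ & hadm & _) & hR); destruct (admissible_bounds _ _ _ hadm) as (_ & hr & _).
  apply Rabs_le; lra.
Qed.

(* The constraint gives [|4 Omega v / (3 + v^2)| <= R1], with [Omega >= 1/2] here. *)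
Lemma abs_v_le (t : R) : tau0 <= t -> Sp t ^ 2 <= / 4 -> R1 t <= / 4 ->
  Rabs (v t) <= 2 * R1 t.
Proof.
  intros ht hS hR.
  destruct (admissible_bounds _ _ _ (state_admissible t ht)) as (_ & hr & _ & hO).
  pose proof (hcons t ht) as hc; pose proof (hv t ht); unfold Omega in hc.
  set (O := 1 - Sp t ^ 2 - R1 t) in *.
  set (y := / (3 + v t ^ 2)).
  assert (hy : y * (3 + v t ^ 2) = 1) by (unfold y; field; nra).
  assert (/ 4 <= y) by nra.
  set (w := 4 * O * v t / (3 + v t ^ 2)) in *.
  assert (hw : w = 4 * O * y * v t) by (unfold w, y; field; nra).
  assert (w ^ 2 <= R1 t ^ 2) by (pose proof (pow2_ge_0 (R2 t)); lra).
  assert (hwR : Rabs w <= R1 t) by (apply Rabs_le; split; nra).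
  rewrite hw, !Rabs_mult, (Rabs_pos_eq 4), (Rabs_pos_eq O), (Rabs_pos_eq y) in hwR by lra.
  assert (/ 8 <= O * y) by (unfold O; nra).
  pose proof (Rabs_pos (v t)); nra.
Qed.

Lemma v_lim : is_lim v p_infty 0.
Proof.
  apply is_lim_0_eventually; intros eps heps.
  pose proof (proj1 (is_lim_0_eventually Sp) Sp_lim (/ 2) ltac:(lra)) as hS.
  pose proof (proj1 (is_lim_0_eventually R1) R1_lim (Rmin (/ 4) (eps / 2))
    ltac:(apply Rmin_glb_lt; lra)) as hR.
  generalize (filter_and _ _ (eventually_gt tau0) (filter_and _ _ hS hR)); apply filter_imp.
  intros t (ht & hSt & hRt).
  pose proof (Rmin_l (/ 4) (eps / 2)); pose proof (Rmin_r (/ 4) (eps / 2)).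
  apply Rabs_le_between in hSt, hRt.
  pose proof (abs_v_le t ltac:(lra) ltac:(nra) ltac:(lra)); lra.
Qed.

Lemma R2_lim : is_lim R2 p_infty 0.
Proof.
  apply (is_lim_le_le_loc (fun _ => 0) R1); [| apply is_lim_const | apply R1_lim].
  exists tau0; intros t ht.
  destruct (state_admissible t ltac:(lra)) as [hr _]; lra.
Qed.

Let logR1M_avg (t : R) : R :=
  ln (R1 t) - ln (M t) + M t * sin (2 * psi t) * R2 t / (2 * R1 t).

Definition logR1M_avg_rate (S r1 r2 m c s : R) : R :=
  1 + 4 * S + 3 * S ^ 2 + 3 * r2 * c - 2 * S * c * (r2 / r1) + 3 * r2 * m * s
  + m / 2 * (- M_decay S r2 m c s * s * (r2 / r1) + 2 * (1 + S) * c * s * (r2 / r1) ^ 2).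

Lemma is_derive_logR1M_avg (t : R) : tau0 < t ->
  is_derive logR1M_avg t
    (logR1M_avg_rate (Sp t) (R1 t) (R2 t) (M t) (cos (2 * psi t)) (sin (2 * psi t))).
Proof.
  intros ht; pose proof (hMpos t ltac:(lra)); pose proof (hR1 t ltac:(lra)).
  pose proof (hR2 t ltac:(lra)).
  unfold logR1M_avg; auto_derive_solution; try lra.
  unfold logR1M_avg_rate, M_decay; field; lra.
Qed.

Lemma logR1M_avg_rate_ge (S r1 r2 m c s : R) : Rabs S <= / 100 -> 0 < r2 <= r1 ->
  r2 <= / 100 -> 0 < m <= / 100 -> Rabs c <= 1 -> Rabs s <= 1 ->
  / 2 <= logR1M_avg_rate S r1 r2 m c s.
Proof.
  intros hS hr hr2 hm hc hs.
  assert (Rabs r2 <= / 100) by (apply Rabs_le; lra).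
  assert (Rabs m <= / 100) by (apply Rabs_le; lra).
  assert (Rabs (r2 / r1) <= 1).
  { rewrite Rabs_pos_eq by (apply Rlt_le, Rdiv_lt_0_compat; lra).
    apply Rmult_le_reg_r with r1; [lra |].
    unfold Rdiv; rewrite Rmult_assoc, Rinv_l; lra. }
  enough (hrest : Rabs (4 * S + 3 * S ^ 2 + 3 * r2 * c - 2 * S * c * (r2 / r1)
    + 3 * r2 * m * s + m / 2 * (- M_decay S r2 m c s * s * (r2 / r1)
    + 2 * (1 + S) * c * s * (r2 / r1) ^ 2)) <= / 2).
  { apply Rabs_le_between in hrest; unfold logR1M_avg_rate; lra. }
  unfold M_decay; eapply Rle_trans; [bound_Rabs | lra].
Qed.

Lemma logR1M_avg_lim : is_lim logR1M_avg p_infty p_infty.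
Proof.
  pose proof (proj1 (is_lim_0_eventually M) hMlim (/ 100) ltac:(lra)) as hM.
  pose proof (proj1 (is_lim_0_eventually Sp) Sp_lim (/ 100) ltac:(lra)) as hS.
  pose proof (proj1 (is_lim_0_eventually R1) R1_lim (/ 100) ltac:(lra)) as hR.
  destruct (filter_and _ _ eventually_state (filter_and _ _ hM (filter_and _ _ hS hR)))
    as [T hT].
  set (T1 := T + 1).
  assert (hgrow : forall t, T1 <= t -> logR1M_avg T1 + (t - T1) / 2 <= logR1M_avg t).
  { intros t ht.
    enough (/ 2 * (t - T1) <= logR1M_avg t - logR1M_avg T1) by lra.
    apply (increment_ge_of_derive_ge logR1M_avg (fun x =>
      logR1M_avg_rate (Sp x) (R1 x) (R2 x) (M x) (cos (2 * psi x)) (sin (2 * psi x))));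
      [lra | |]; intros x hx;
      destruct (hT x ltac:(unfold T1 in *; lra))
        as ((? & [hr _] & _ & ? & ? & ?) & hMx & ? & hRx).
    - apply is_derive_logR1M_avg; auto.
    - apply Rabs_le_between in hMx, hRx; apply logR1M_avg_rate_ge; auto; lra. }
  apply is_lim_p_infty_eventually; intros K.
  exists (T1 + 2 * Rabs (K - logR1M_avg T1)); intros t ht.
  pose proof (Rabs_pos (K - logR1M_avg T1)); pose proof (Rle_abs (K - logR1M_avg T1)).
  specialize (hgrow t ltac:(lra)); lra.
Qed.

Lemma R1_div_M_lim : is_lim (fun t => R1 t / M t) p_infty p_infty.
Proof.
  apply (is_lim_le_p_loc (fun t => logR1M_avg t - / 2)).
  2:{ apply is_lim_p_infty_eventually; intros K.
      generalize (proj2 (is_lim_spec _ _ _) logR1M_avg_lim (K + / 2)); apply filter_imp.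
      intros t ht; lra. }
  pose proof (proj1 (is_lim_0_eventually M) hMlim 1 ltac:(lra)) as hM.
  generalize (filter_and _ _ eventually_state hM); apply filter_imp.
  intros t ((_ & [hr _] & _ & hMp & _ & hs) & hMt).
  apply Rabs_le_between in hMt, hs.
  assert (hcorr : M t * sin (2 * psi t) * R2 t / (2 * R1 t) <= / 2).
  { assert (0 <= R2 t / (2 * R1 t) <= / 2).
    { split; [apply Rlt_le, Rdiv_lt_0_compat; lra |].
      apply Rmult_le_reg_r with (2 * R1 t); [lra |].
      unfold Rdiv; rewrite Rmult_assoc, Rinv_l; lra. }
    replace (M t * sin (2 * psi t) * R2 t / (2 * R1 t))
      with (M t * sin (2 * psi t) * (R2 t / (2 * R1 t))) by (field; lra).
    assert (- 1 <= M t * sin (2 * psi t) <= 1) by (split; nra); nra. }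
  pose proof (exp_ineq1_le (ln (R1 t / M t))) as hexp.
  rewrite exp_ln in hexp by (apply Rdiv_lt_0_compat; lra).
  rewrite ln_div in hexp by lra.
  unfold logR1M_avg; lra.
Qed.

(* The shift [- M / 4 + i] compensates the fast rotation of [e^(2 i psi)], so
   that [N] grows like [e^(2 tau)] as long as it stays of order one. *)
Let N (t : R) : R :=
  (2 * R2 t * cos (2 * psi t) / ((1 + Sp t) * M t * R1 t) - M t / 4) ^ 2
  + (2 * R2 t * sin (2 * psi t) / ((1 + Sp t) * M t * R1 t) + 1) ^ 2.

Definition N_re (S r1 r2 m c : R) : R := 2 * r2 * c / ((1 + S) * m * r1) - m / 4.

Definition N_im (S r1 r2 m s : R) : R := 2 * r2 * s / ((1 + S) * m * r1) + 1.

Definition N_gain (S r1 r2 m c s dS : R) : R :=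
  M_decay S r2 m c s - dS / (1 + S) + 2 * (1 + S) * c * r2 / r1.

(* The term in [1 - c ^ 2 - s ^ 2] vanishes for [c = cos 2psi], [s = sin 2psi];
   it makes [is_derive_N] a plain field identity in [c] and [s]. *)
Definition N_rate (S r1 r2 m c s dS : R) : R :=
  2 * N_gain S r1 r2 m c s dS * (N_re S r1 r2 m c ^ 2 + N_im S r1 r2 m s ^ 2)
  + 2 * (N_re S r1 r2 m c * ((N_gain S r1 r2 m c s dS * m + m * M_decay S r2 m c s) / 4
                             + 4 / m * (1 - c ^ 2 - s ^ 2))
         + N_im S r1 r2 m s * (1 - N_gain S r1 r2 m c s dS)).

Lemma is_derive_N (t : R) : tau0 < t ->
  is_derive N t (N_rate (Sp t) (R1 t) (R2 t) (M t) (cos (2 * psi t)) (sin (2 * psi t))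
    (Sp_rate (Sp t) (R1 t) (R2 t) (cos (2 * psi t)) (v t))).
Proof.
  intros ht; pose proof (hMpos t ltac:(lra)).
  destruct (admissible_bounds _ _ _ (state_admissible t ltac:(lra))) as (hS & hr & _).
  assert (0 < (1 + Sp t) * M t * R1 t)
    by (apply Rmult_lt_0_compat; [apply Rmult_lt_0_compat |]; lra).
  unfold N; auto_derive_solution; try lra.
  unfold N_rate, N_gain, N_re, N_im, Sp_rate, M_decay, Omega.
  field; repeat split; nra.
Qed.

Lemma N_rate_ge (S r1 r2 m c s dS : R) : Rabs S <= / 1000 -> 0 < r2 <= r1 ->
  r2 <= / 1000 -> 0 < m <= / 10000 -> Rabs dS <= / 1000 ->
  c ^ 2 + s ^ 2 = 1 -> Rabs c <= 1 -> Rabs s <= 1 ->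
  / 8 <= N_re S r1 r2 m c ^ 2 + N_im S r1 r2 m s ^ 2 <= 4 ->
  / 8 <= N_rate S r1 r2 m c s dS.
Proof.
  intros hS hr hr2 hm hdS hcs hc hs hN.
  assert (aS := hS); apply Rabs_le_between in hS.
  assert (Rabs r2 <= / 1000) by (apply Rabs_le; lra).
  assert (Rabs m <= / 10000) by (apply Rabs_le; lra).
  unfold N_rate; replace (1 - c ^ 2 - s ^ 2) with 0 by lra.
  set (X := N_re S r1 r2 m c) in *; set (Y := N_im S r1 r2 m s) in *.
  assert (Rabs X <= 2) by (apply Rabs_le; nra).
  assert (Rabs Y <= 2) by (apply Rabs_le; nra).
  assert (hX : 2 * (1 + S) * c * r2 / r1 = (1 + S) ^ 2 * m * (X + m / 4))
    by (unfold X, N_re; field; lra).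
  assert (hXsmall : Rabs ((1 + S) ^ 2 * m * (X + m / 4)) <= / 1000)
    by (eapply Rle_trans; [bound_Rabs | lra]).
  assert (hQ : Rabs (M_decay S r2 m c s - 1) <= 4 / 1000).
  { replace (M_decay S r2 m c s - 1) with (2 * S + S ^ 2 + r2 * c + 3 * r2 * m * s)
      by (unfold M_decay; ring).
    eapply Rle_trans; [bound_Rabs | lra]. }
  assert (hdS1 : Rabs (dS / (1 + S)) <= 2 / 1000).
  { unfold Rdiv; rewrite Rabs_mult, Rabs_inv, (Rabs_pos_eq (1 + S)) by lra.
    apply Rmult_le_reg_r with (1 + S); [lra |].
    rewrite Rmult_assoc, Rinv_l by lra; nra. }
  assert (hg : 99 / 100 <= N_gain S r1 r2 m c s dS <= 101 / 100).
  { unfold N_gain; rewrite hX.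
    apply Rabs_le_between in hXsmall, hQ, hdS1; lra. }
  set (g := N_gain S r1 r2 m c s dS) in *.
  apply Rabs_le_between in hQ.
  assert (Rabs ((g * m + m * M_decay S r2 m c s) / 4 + 4 / m * 0) <= m).
  { rewrite Rmult_0_r, Rplus_0_r; apply Rabs_le; split; nra. }
  assert (h1 : Rabs (X * ((g * m + m * M_decay S r2 m c s) / 4 + 4 / m * 0)) <= 2 * m)
    by (apply Rabs_mult_le; auto).
  assert (h2 : Rabs (Y * (1 - g)) <= 2 * (1 / 100))
    by (apply Rabs_mult_le; auto; apply Rabs_le; lra).
  apply Rabs_le_between in h1, h2.
  assert (2 * (99 / 100) * (X ^ 2 + Y ^ 2) <= 2 * g * (X ^ 2 + Y ^ 2)) by nra.
  lra.
Qed.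

Lemma offset_norm_ge (x y m : R) : 0 <= m <= 1 ->
  (x - m / 4) ^ 2 + (y + 1) ^ 2 < / 4 \/ 3 <= (x - m / 4) ^ 2 + (y + 1) ^ 2 ->
  / 16 <= x ^ 2 + y ^ 2.
Proof.
  intros hm [hin | hout]; apply Rnot_lt_le; intros hsmall.
  - assert ((y + 1) ^ 2 < / 4) by (pose proof (pow2_ge_0 (x - m / 4)); lra).
    assert (y < - / 2) by nra; nra.
  - assert (- / 4 < x < / 4) by (pose proof (pow2_ge_0 y); split; nra).
    assert (- / 4 < y < / 4) by (pose proof (pow2_ge_0 x); split; nra).
    assert ((x - m / 4) ^ 2 <= / 4) by nra.
    assert ((y + 1) ^ 2 <= 25 / 16) by nra.
    lra.
Qed.

Lemma eventually_N_outside : Rbar_locally p_infty (fun t => N t < / 4 \/ 3 <= N t).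
Proof.
  pose proof (proj1 (is_lim_0_eventually M) hMlim (/ 10000) ltac:(lra)) as hM.
  pose proof (proj1 (is_lim_0_eventually Sp) Sp_lim (/ 10000) ltac:(lra)) as hS.
  pose proof (proj1 (is_lim_0_eventually R1) R1_lim (/ 10000) ltac:(lra)) as hR.
  pose proof (proj1 (is_lim_0_eventually v) v_lim (/ 10000) ltac:(lra)) as hvs.
  destruct (filter_and _ _ eventually_state
    (filter_and _ _ hM (filter_and _ _ hS (filter_and _ _ hR hvs)))) as [T hT].
  apply (eventually_outside_band N (fun t =>
    N_rate (Sp t) (R1 t) (R2 t) (M t) (cos (2 * psi t)) (sin (2 * psi t))
      (Sp_rate (Sp t) (R1 t) (R2 t) (cos (2 * psi t)) (v t))) T (/ 8) 4 (/ 4) 3 (/ 8));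
    try lra.
  - intros t ht; apply is_derive_N; destruct (hT t ht) as [[] _]; auto.
  - intros t ht hNt.
    destruct (hT t ht) as ((_ & hadm & hvt & hMp & hc & hs) & hMt & hSt & hRt & hvt').
    pose proof (Sp_rate_bound _ _ _ _ _ hadm hvt hc) as hrate.
    destruct (admissible_bounds _ _ _ hadm) as (_ & hr & _).
    apply Rabs_le_between in hMt, hRt.
    apply N_rate_ge; auto; try lra.
    + pose proof (sin2_cos2 (2 * psi t)); unfold Rsqr in *; lra.
Qed.

Lemma eventually_R2_ge : Rbar_locally p_infty (fun t => M t * R1 t / 16 <= R2 t).
Proof.
  pose proof (proj1 (is_lim_0_eventually M) hMlim 1 ltac:(lra)) as hM.
  pose proof (proj1 (is_lim_0_eventually Sp) Sp_lim (/ 2) ltac:(lra)) as hS.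
  generalize (filter_and _ _ eventually_state
    (filter_and _ _ eventually_N_outside (filter_and _ _ hM hS))); apply filter_imp.
  intros t ((_ & hadm & _ & hMp & _) & hNt & hMt & hSt).
  destruct (admissible_bounds _ _ _ hadm) as (_ & hr & _).
  apply Rabs_le_between in hMt, hSt.
  set (D := (1 + Sp t) * M t * R1 t).
  assert (hD : 0 < D) by (unfold D; apply Rmult_lt_0_compat; [apply Rmult_lt_0_compat |]; lra).
  set (rho := 2 * R2 t / D).
  assert (hrho : 0 < rho) by (apply Rdiv_lt_0_compat; lra).
  assert (hnorm : (rho * cos (2 * psi t)) ^ 2 + (rho * sin (2 * psi t)) ^ 2 = rho ^ 2).
  { pose proof (sin2_cos2 (2 * psi t)); unfold Rsqr in *; nra. }
  assert (/ 16 <= rho ^ 2).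
  { rewrite <- hnorm; apply (offset_norm_ge _ _ (M t)); [lra |].
    replace (rho * cos (2 * psi t)) with (2 * R2 t * cos (2 * psi t) / D)
      by (unfold rho; field; lra).
    replace (rho * sin (2 * psi t)) with (2 * R2 t * sin (2 * psi t) / D)
      by (unfold rho; field; lra).
    exact hNt. }
  assert (hquarter : D / 8 <= R2 t).
  { assert (/ 4 <= rho) by nra.
    replace (R2 t) with (rho * D / 2) by (unfold rho; field; lra); nra. }
  unfold D in hquarter; nra.
Qed.

Lemma R2_div_M2_lim : is_lim (fun t => R2 t / M t ^ 2) p_infty p_infty.
Proof.
  apply (is_lim_le_p_loc (fun t => R1 t / M t / 16)).
  - generalize (filter_and _ _ eventually_state eventually_R2_ge); apply filter_imp.
    intros t ((_ & _ & _ & hMp & _) & hR2t).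
    replace (R1 t / M t / 16) with ((M t * R1 t / 16) / M t ^ 2) by (field; lra).
    apply Rmult_le_compat_r; [apply Rlt_le, Rinv_0_lt_compat; nra | exact hR2t].
  - apply is_lim_p_infty_eventually; intros K.
    generalize (proj2 (is_lim_spec _ _ _) R1_div_M_lim (16 * K)); apply filter_imp.
    intros t ht; lra.
Qed.

Lemma R1_div_M2_lim : is_lim (fun t => R1 t / M t ^ 2) p_infty p_infty.
Proof.
  apply (is_lim_le_p_loc (fun t => R1 t / M t)); [| exact R1_div_M_lim].
  pose proof (proj1 (is_lim_0_eventually M) hMlim 1 ltac:(lra)) as hM.
  generalize (filter_and _ _ eventually_state hM); apply filter_imp.
  intros t ((_ & hadm & _ & hMp & _) & hMt); apply Rabs_le_between in hMt.
  destruct hadm as [hr _].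
  replace (R1 t / M t ^ 2) with (R1 t / M t * / M t) by (field; lra).
  assert (0 < R1 t / M t) by (apply Rdiv_lt_0_compat; lra).
  assert (1 <= / M t) by (rewrite <- Rinv_1; apply Rinv_le_contravar; lra).
  nra.
Qed.

End Asymptotics.


Theorem theorem1 (tau0 : R) (Sp R1 R2 M psi v : R -> R)
  (dSp : forall t, tau0 < t -> is_derive Sp t
     (- (1 - Sp t ^ 2) * Sp t - R1 t + (1 + Sp t) * R2 t * cos (2 * psi t)
      - 4 * Omega (Sp t) (R1 t) * v t ^ 2 / (3 + v t ^ 2)))
  (dR1 : forall t, tau0 < t -> is_derive R1 t
     (2 * ((1 + Sp t) * Sp t + R2 t * cos (2 * psi t)) * R1 t
      - 2 * (1 + Sp t) * cos (2 * psi t) * R2 t))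
  (dR2 : forall t, tau0 < t -> is_derive R2 t
     (2 * ((1 + Sp t) * Sp t + R2 t * cos (2 * psi t)) * R2 t
      - 2 * (1 + Sp t) * cos (2 * psi t) * R1 t))
  (dM : forall t, tau0 < t -> is_derive M t
     (- ((1 + Sp t) ^ 2 + R2 t * cos (2 * psi t)
         + 3 * R2 t * M t * sin (2 * psi t)) * M t))
  (dpsi : forall t, tau0 < t -> is_derive psi t
     (2 / M t + (1 + Sp t) * (R1 t / R2 t) * sin (2 * psi t)))
  (dv : forall t, tau0 < t -> is_derive v t
     (6 / (3 - v t ^ 2) * Sp t * (1 - v t ^ 2) * v t))
  (hv : forall t, tau0 <= t -> -1 < v t < 1)
  (hcons : forall t, tau0 <= t ->
     R1 t ^ 2 - R2 t ^ 2 - (4 * Omega (Sp t) (R1 t) * v t / (3 + v t ^ 2)) ^ 2 = 0)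
  (hOmega : forall t, tau0 <= t -> 0 < Omega (Sp t) (R1 t))
  (hR1 : forall t, tau0 <= t -> 0 < R1 t)
  (hR2 : forall t, tau0 <= t -> 0 < R2 t)
  (hMpos : forall t, tau0 <= t -> 0 < M t)
  (hMlim : is_lim M p_infty 0) :
  is_lim Sp p_infty 0 /\ is_lim R1 p_infty 0 /\ is_lim R2 p_infty 0 /\
  is_lim v p_infty 0 /\ is_lim M p_infty 0 /\
  is_lim (fun t => R1 t / M t ^ 2) p_infty p_infty /\
  is_lim (fun t => R2 t / M t ^ 2) p_infty p_infty.
Proof.
  repeat split;
    [ eapply Sp_lim | eapply R1_lim | eapply R2_lim | eapply v_lim | exact hMlim
    | eapply R1_div_M2_lim | eapply R2_div_M2_lim ]; eassumption.
Qed.
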